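(* Let $X$ be a Tychonoff space. The following are equivalent: (1) $(C(X),\tau_\Gamma)$ is second countable; (2) $(C(X),\tau_\Gamma)$ has a countable network; (3) $(C(X),\tau_\Gamma)$ is separable; (4) $(C(X),\tau_\Gamma)$ has the countable chain condition; (5) $X$ is compact and metrizable.
   Context: $C(X)$ is the set of continuous real-valued functions on $X$, each identified with its graph in $X\times\mathbb{R}$. The graph topology $\tau_\Gamma$ on $C(X)$ has base $\{F_G: G\text{ open in }X\times\mathbb{R}\}$ where $F_G=\{f\in C(X): f\subset G\}$. *)

From Stdlib Require Import Reals List.
Open Scope R_scope.

Definition is_topology {X : Type} (T : (X -> Prop) -> Prop) : Prop :=
  T (fun _ => True) /\
  (forall U V, T U -> T V -> T (fun x => U x /\ V x)) /\
  (forall F : (X -> Prop) -> Prop, (forall U, F U -> T U) ->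
     T (fun x => exists U, F U /\ U x)).

Definition R_open (U : R -> Prop) : Prop :=
  forall x, U x -> exists e, 0 < e /\ forall y, Rabs (y - x) < e -> U y.

Definition continuous_real {X : Type} (T : (X -> Prop) -> Prop) (f : X -> R) : Prop :=
  forall U, R_open U -> T (fun x => U (f x)).

Definition T1 {X : Type} (T : (X -> Prop) -> Prop) : Prop :=
  forall x y : X, x <> y -> exists U, T U /\ U x /\ ~ U y.

Definition completely_regular {X : Type} (T : (X -> Prop) -> Prop) : Prop :=
  forall (A : X -> Prop) (x : X), T (fun y => ~ A y) -> ~ A x ->
    exists f, continuous_real T f /\ f x = 0 /\ (forall y, A y -> f y = 1) /\
              (forall y, 0 <= f y <= 1).

Definition tychonoff {X : Type} (T : (X -> Prop) -> Prop) : Prop :=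
  is_topology T /\ T1 T /\ completely_regular T.

Definition compact_space {X : Type} (T : (X -> Prop) -> Prop) : Prop :=
  forall C : (X -> Prop) -> Prop,
    (forall U, C U -> T U) -> (forall x, exists U, C U /\ U x) ->
    exists l : list (X -> Prop), (forall U, In U l -> C U) /\
                                 (forall x, exists U, In U l /\ U x).

Definition is_metric {X : Type} (d : X -> X -> R) : Prop :=
  (forall x y, 0 <= d x y) /\ (forall x y, d x y = 0 <-> x = y) /\
  (forall x y, d x y = d y x) /\ (forall x y z, d x z <= d x y + d y z).

Definition metric_open {X : Type} (d : X -> X -> R) (U : X -> Prop) : Prop :=
  forall x, U x -> exists e, 0 < e /\ forall y, d x y < e -> U y.

Definition metrizable {X : Type} (T : (X -> Prop) -> Prop) : Prop :=
  exists d, is_metric d /\ forall U, T U <-> metric_open d U.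

Definition CX {X : Type} (T : (X -> Prop) -> Prop) : Type :=
  { f : X -> R | continuous_real T f }.

Definition prod_open {X : Type} (T : (X -> Prop) -> Prop) (G : X * R -> Prop) : Prop :=
  forall x y, G (x, y) -> exists U e, T U /\ U x /\ 0 < e /\
    forall x' y', U x' -> Rabs (y' - y) < e -> G (x', y').

Definition graph_in {X : Type} {T : (X -> Prop) -> Prop} (f : CX T) (G : X * R -> Prop) : Prop :=
  forall x, G (x, proj1_sig f x).

Definition F_ {X : Type} {T : (X -> Prop) -> Prop} (G : X * R -> Prop) : CX T -> Prop :=
  fun f => graph_in f G.

(* Graph topology: topology generated by the base {F_G : G open in X x R}. *)
Definition graph_open {X : Type} (T : (X -> Prop) -> Prop) (W : CX T -> Prop) : Prop :=
  forall f, W f -> exists G, prod_open T G /\ graph_in f G /\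
                          forall g, F_ (T := T) G g -> W g.

Definition second_countable {A : Type} (O : (A -> Prop) -> Prop) : Prop :=
  exists B : nat -> (A -> Prop), (forall n, O (B n)) /\
    forall W, O W -> forall a, W a -> exists n, B n a /\ forall b, B n b -> W b.

Definition countable_network {A : Type} (O : (A -> Prop) -> Prop) : Prop :=
  exists N : nat -> (A -> Prop),
    forall W, O W -> forall a, W a -> exists n, N n a /\ forall b, N n b -> W b.

Definition separable {A : Type} (O : (A -> Prop) -> Prop) : Prop :=
  exists D : nat -> A, forall W, O W -> (exists a, W a) -> exists n, W (D n).

Definition ccc {A : Type} (O : (A -> Prop) -> Prop) : Prop :=
  forall F : (A -> Prop) -> Prop,
    (forall W, F W -> O W /\ exists a, W a) ->
    (forall W V, F W -> F V -> W <> V -> forall a, ~ (W a /\ V a)) ->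
    exists e : nat -> (A -> Prop), forall W, F W -> exists n, e n = W.

(* (1) => (2) => (3) => (4) hold in every space.  For (4) => (5):
   - ccc gives a countable uniformly dense subset of C(X): the open tubes
     around a maximal r-separated family of functions are pairwise disjoint;
   - in a Tychonoff space, a uniformly dense sequence (f_n) yields a countable
     network {f_n < 2/3} and the metric sup_n min(1,|f_n x - f_n y|)/(n+1);
   - a non-compact metric space with a countable network contains a closed
     discrete sequence of points; bump functions switched on and off along it
     give continuum many disjoint open sets of C(X), contradicting ccc.
   For (5) => (1): by the tube lemma every open set containing a graph
   contains a uniform tube around it, and minima of finitely many Lipschitz
   cones with coded parameters form a countable uniformly dense family. *)
From Stdlib Require Import Reals List.
From Stdlib Require Import ZArith Lra Lia Classical ClassicalEpsilon
  FunctionalExtensionality PropExtensionality Cantor.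
From mathcomp Require classical_sets.
Open Scope R_scope.

Ltac abs_lra :=
  unfold Rabs in *;
  repeat match goal with
         | |- context [Rcase_abs ?t] => destruct (Rcase_abs t)
         | H : context [Rcase_abs ?t] |- _ => destruct (Rcase_abs t)
         end;
  lra.

Lemma zorn_union {A : Type} (P : (A -> Prop) -> Prop) :
  (forall F : (A -> Prop) -> Prop, (forall S, F S -> P S) ->
     (forall S S', F S -> F S' -> (forall a, S a -> S' a) \/ (forall a, S' a -> S a)) ->
     P (fun a => exists S, F S /\ S a)) ->
  exists S, P S /\ forall S', (forall a, S a -> S' a) -> P S' -> forall a, S' a -> S a.
Proof.
  intros Hchain.
  destruct (@classical_sets.Zorn_bigcup A P) as [S [PS Smax]].
  - intros F FP Ftot.
    replace (classical_sets.bigcup F (fun S => S)) with (fun a => exists S, F S /\ S a).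
    + apply Hchain; [exact FP | exact Ftot].
    + apply functional_extensionality; intro a; apply propositional_extensionality.
      split; [intros [S [FS Sa]]; exists S | intros [S FS Sa]; exists S]; auto.
  - exists S; split; [exact PS|].
    intros S' SS' PS' a S'a; apply NNPP; intro nSa.
    apply (Smax S'); [split; [exact SS'|] | exact PS'].
    intro S'S; exact (nSa (S'S a S'a)).
Qed.

Lemma inv_succ_pos (n : nat) : 0 < / (INR n + 1).
Proof. pose proof (pos_INR n). apply Rinv_0_lt_compat; lra. Qed.

Lemma inv_succ_le1 (n : nat) : / (INR n + 1) <= 1.
Proof. pose proof (pos_INR n). rewrite <- Rinv_1. apply Rinv_le_contravar; lra. Qed.

Lemma inv_succ_small (e : R) : 0 < e -> exists n : nat, / (INR n + 1) < e.
Proof.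
  intros He. destruct (archimed_cor1 e He) as [n [Hn Hn0]]. exists n.
  eapply Rle_lt_trans; [|exact Hn]. apply lt_0_INR in Hn0.
  apply Rinv_le_contravar; lra.
Qed.

(** Supremum of a sequence of reals, meaningful when the sequence is bounded above. *)
Definition seqsup (a : nat -> R) : R :=
  epsilon (inhabits 0) (is_lub (fun r => exists n, r = a n)).

Lemma seqsup_lub (a : nat -> R) (B : R) :
  (forall n, a n <= B) -> is_lub (fun r => exists n, r = a n) (seqsup a).
Proof.
  intros HB. unfold seqsup. apply epsilon_spec.
  destruct (completeness (fun r => exists n, r = a n)) as [m Hm].
  - exists B. intros r [n ->]. apply HB.
  - exists (a 0%nat). eauto.
  - eauto.
Qed.

Lemma seqsup_ge (a : nat -> R) (B : R) (n : nat) :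
  (forall n, a n <= B) -> a n <= seqsup a.
Proof. intros HB. apply (seqsup_lub a B HB). eauto. Qed.

Lemma seqsup_le (a : nat -> R) (b : R) : (forall n, a n <= b) -> seqsup a <= b.
Proof. intros Hb. apply (seqsup_lub a b Hb). intros r [n ->]. apply Hb. Qed.

(** Infimum of a sequence of reals, meaningful when it is bounded below. *)
Definition seqinf (a : nat -> R) : R := - seqsup (fun n => - a n).

Lemma seqinf_le (a : nat -> R) (B : R) (n : nat) : (forall n, B <= a n) -> seqinf a <= a n.
Proof.
  intros HB. unfold seqinf.
  assert (- a n <= seqsup (fun n => - a n)).
  { apply (seqsup_ge (fun n => - a n) (- B)). intros m. specialize (HB m). lra. }
  lra.
Qed.

Lemma seqinf_ge (a : nat -> R) (b : R) : (forall n, b <= a n) -> b <= seqinf a.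
Proof.
  intros Hb. unfold seqinf.
  assert (seqsup (fun n => - a n) <= - b).
  { apply seqsup_le. intros n. specialize (Hb n). lra. }
  lra.
Qed.

Lemma finite_pos_lower_bound (a : nat -> R) (K : nat) :
  (forall M, (M < K)%nat -> 0 < a M) -> exists r, 0 < r /\ forall M, (M < K)%nat -> r <= a M.
Proof.
  induction K as [|K IH]; intros Ha.
  - exists 1. split; [lra | intros M HM; lia].
  - destruct IH as [r [Hr HrM]]; [intros M HM; apply Ha; lia|].
    exists (Rmin r (a K)). split; [apply Rmin_glb_lt; [exact Hr | apply Ha; lia]|].
    intros M HM. destruct (Nat.eq_dec M K) as [-> | ne]; [apply Rmin_r|].
    eapply Rle_trans; [apply Rmin_l | apply HrM; lia].
Qed.

Section OpenSets.
Context {X : Type} (T : (X -> Prop) -> Prop) (HT : is_topology T).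

Lemma open_ext (U V : X -> Prop) : T U -> (forall x, U x <-> V x) -> T V.
Proof.
  intros HU E. replace V with U; [exact HU|].
  apply functional_extensionality; intro x; apply propositional_extensionality, E.
Qed.

Lemma open_inter (U V : X -> Prop) : T U -> T V -> T (fun x => U x /\ V x).
Proof. apply HT. Qed.

Lemma open_union (F : (X -> Prop) -> Prop) :
  (forall U, F U -> T U) -> T (fun x => exists U, F U /\ U x).
Proof. apply HT. Qed.

(** A set defined by a proposition not depending on the point is [X] or empty. *)
Lemma open_const (P : Prop) : T (fun _ => P).
Proof.
  destruct (classic P) as [p | np].
  - apply (open_ext (fun _ => True)); [apply HT | tauto].
  - apply (open_ext (fun x => exists U, (fun _ => False) U /\ U x)).
    + apply open_union; intros U [].
    + intros x; split; [intros [U [[] _]] | tauto].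
Qed.

Lemma cont_const (c : R) : continuous_real T (fun _ => c).
Proof. intros U _. apply open_const. Qed.

Lemma cont_ball (f : X -> R) (c r : R) :
  continuous_real T f -> T (fun x => Rabs (f x - c) < r).
Proof.
  intros Hf. apply (Hf (fun y => Rabs (y - c) < r)).
  intros y Hy. exists (r - Rabs (y - c)); split; [lra|].
  intros z Hz. abs_lra.
Qed.

Definition tube (h : X -> R) (r : R) : X * R -> Prop :=
  fun p => Rabs (snd p - h (fst p)) < r.

Lemma tube_open (h : X -> R) (r : R) : continuous_real T h -> prod_open T (tube h r).
Proof.
  intros Hh x y Hxy. unfold tube in Hxy; simpl in Hxy.
  set (e := (r - Rabs (y - h x)) / 2).
  exists (fun x' => Rabs (h x' - h x) < e), e.
  split; [apply cont_ball; exact Hh|].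
  split; [unfold e; abs_lra|].
  split; [unfold e; lra|].
  intros x' y' Hx' Hy'. unfold tube, e in *; simpl. abs_lra.
Qed.

Lemma basic_graph_open (G : X * R -> Prop) : prod_open T G -> graph_open T (F_ (T := T) G).
Proof. intros HG f Hf. exists G; auto. Qed.

Lemma graph_in_tube (f : CX T) (r : R) : 0 < r -> graph_in f (tube (proj1_sig f) r).
Proof. intros Hr x. unfold tube; simpl. abs_lra. Qed.

End OpenSets.

Section CardinalFunctions.
Context {A : Type} (O : (A -> Prop) -> Prop).

Lemma second_countable_network : second_countable O -> countable_network O.
Proof. intros [B [_ HB]]. exists B. exact HB. Qed.

Lemma network_separable (a0 : A) : countable_network O -> separable O.
Proof.
  intros [N HN]. exists (fun n => epsilon (inhabits a0) (N n)).
  intros W HW [a Ha]. destruct (HN W HW a Ha) as [n [Hn Hsub]].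
  exists n. apply Hsub, epsilon_spec. eauto.
Qed.

Lemma separable_ccc : separable O -> ccc O.
Proof.
  intros [D HD] F HF Hdis.
  exists (fun n => epsilon (inhabits (fun _ : A => False)) (fun W => F W /\ W (D n))).
  intros W FW. destruct (HF W FW) as [OW neW].
  destruct (HD W OW neW) as [n Hn]. exists n.
  destruct (epsilon_spec (inhabits (fun _ : A => False)) (fun W => F W /\ W (D n)))
    as [FE EDn]; [eauto|].
  apply NNPP. intro Hne. exact (Hdis _ W FE FW Hne (D n) (conj EDn Hn)).
Qed.

(** A ccc space has no family of pairwise disjoint nonempty open sets indexed
    by the (uncountable) set of binary sequences: Cantor's diagonal argument. *)
Lemma ccc_no_cantor_family (W : (nat -> bool) -> A -> Prop) :
  (forall s, O (W s)) -> (forall s, exists a, W s a) ->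
  (forall s s' a, W s a -> W s' a -> s = s') -> ~ ccc O.
Proof.
  intros Wopen Wne Wdis Hc.
  destruct (Hc (fun V => exists s, V = W s)) as [e He].
  - intros V [s ->]. auto.
  - intros V V' [s ->] [s' ->] Hne a [Ha Ha']. apply Hne. f_equal. exact (Wdis s s' a Ha Ha').
  - set (code := fun n => epsilon (inhabits (fun _ : nat => false)) (fun s => e n = W s)).
    set (t := fun n => negb (code n n)).
    destruct (He (W t)) as [n Hn]; [exists t; reflexivity|].
    assert (Hcode : e n = W (code n)) by (apply epsilon_spec; eauto).
    destruct (Wne t) as [a Ha].
    assert (Htn : t = code n) by (apply (Wdis t (code n) a Ha); rewrite <- Hcode, Hn; exact Ha).
    assert (Hdiag : t n = code n n) by (rewrite Htn; reflexivity).
    unfold t in Hdiag. destruct (code n n); discriminate Hdiag.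
Qed.

End CardinalFunctions.

Definition uniformly_dense {X : Type} {T : (X -> Prop) -> Prop} (D : nat -> CX T) : Prop :=
  forall (g : CX T) (eps : R), 0 < eps ->
    exists n, forall x, Rabs (proj1_sig (D n) x - proj1_sig g x) < eps.

(** (4) => uniform separability: a maximal [r]-separated family of continuous
    functions gives disjoint open tubes of radius [r/2], hence is countable by ccc,
    and every function is [r]-close to one of its members. *)
Section CccUniformlyDense.
Context {X : Type} (T : (X -> Prop) -> Prop) (HT : is_topology T).

Definition separated (r : R) (S : CX T -> Prop) : Prop :=
  forall f g : CX T, S f -> S g -> f <> g ->
    exists x, r <= Rabs (proj1_sig f x - proj1_sig g x).

Lemma maximal_separated (r : R) : 0 < r ->
  exists S, separated r S /\
    forall g : CX T, exists f, S f /\ forall x, Rabs (proj1_sig f x - proj1_sig g x) < r.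
Proof.
  intros Hr. destruct (zorn_union (separated r)) as [S [Ssep Smax]].
  { intros F Fsep Ftot f g [A [FA Af]] [B [FB Bg]] fg.
    destruct (Ftot A B FA FB) as [AB | BA].
    - exact (Fsep B FB f g (AB f Af) Bg fg).
    - exact (Fsep A FA f g Af (BA g Bg) fg). }
  exists S; split; [exact Ssep|]. intros g.
  destruct (classic (S g)) as [Sg | nSg].
  { exists g; split; [exact Sg|]. intros x. unfold Rminus; rewrite Rplus_opp_r, Rabs_R0.
    exact Hr. }
  apply NNPP; intro Hfar. apply nSg.
  assert (Hfar' : forall f, S f -> exists x, r <= Rabs (proj1_sig f x - proj1_sig g x)).
  { intros f Sf. apply NNPP; intro Hnear. apply Hfar. exists f; split; [exact Sf|].
    intros x. apply Rnot_le_lt. intro Hx. apply Hnear. eauto. }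
  apply (Smax (fun h => S h \/ h = g)); [auto | | auto].
  intros f h [Sf | ->] [Sh | ->] fh.
  - exact (Ssep f h Sf Sh fh).
  - exact (Hfar' f Sf).
  - destruct (Hfar' h Sh) as [x Hx]. exists x. rewrite Rabs_minus_sym. exact Hx.
  - congruence.
Qed.

Lemma ccc_countable_net (Hc : ccc (graph_open T)) (r : R) : 0 < r ->
  exists c : nat -> CX T, forall g : CX T, exists n,
    forall x, Rabs (proj1_sig (c n) x - proj1_sig g x) < 2 * r.
Proof.
  intros Hr. destruct (maximal_separated r Hr) as [S [Ssep Snear]].
  set (tubeS := fun f : CX T => F_ (T := T) (tube (proj1_sig f) (r / 2))).
  destruct (Hc (fun W => exists f, S f /\ W = tubeS f)) as [e He].
  - intros W [f [Sf ->]]. split.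
    + apply basic_graph_open, (tube_open T), (proj2_sig f).
    + exists f. apply graph_in_tube; lra.
  - intros W V [f [Sf ->]] [g [Sg ->]] WV a [Haf Hag].
    assert (fg : f <> g) by (intros E; apply WV; rewrite E; reflexivity).
    destruct (Ssep f g Sf Sg fg) as [x Hx].
    specialize (Haf x); specialize (Hag x). unfold tube in *; simpl in *. abs_lra.
  - set (z0 := exist _ (fun _ => 0) (cont_const T HT 0) : CX T).
    exists (fun n => epsilon (inhabits z0) (fun f => S f /\ e n = tubeS f)).
    intros g. destruct (Snear g) as [f [Sf Hf]].
    destruct (He (tubeS f)) as [n Hn]; [eauto|].
    exists n. set (cn := epsilon _ _).
    assert (Hcn : S cn /\ e n = tubeS cn) by (apply epsilon_spec; eauto).
    assert (Hin : tubeS cn f).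
    { rewrite <- (proj2 Hcn), Hn. apply graph_in_tube; lra. }
    intros x. specialize (Hin x); specialize (Hf x). unfold tube in Hin; simpl in Hin. abs_lra.
Qed.

Lemma ccc_uniformly_dense (Hc : ccc (graph_open T)) : exists D : nat -> CX T, uniformly_dense D.
Proof.
  destruct (choice (fun (k : nat) (c : nat -> CX T) => forall g : CX T, exists n,
      forall x, Rabs (proj1_sig (c n) x - proj1_sig g x) < 2 * / (INR k + 1))) as [c Hc'].
  { intros k. apply ccc_countable_net; [exact Hc | apply inv_succ_pos]. }
  exists (fun m => c (fst (Cantor.of_nat m)) (snd (Cantor.of_nat m))).
  intros g eps Heps. destruct (inv_succ_small (eps / 2)) as [k Hk]; [lra|].
  destruct (Hc' k g) as [n Hn].
  exists (Cantor.to_nat (k, n)). rewrite Cantor.cancel_of_to; simpl.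
  intros x. specialize (Hn x). lra.
Qed.

End CccUniformlyDense.

(** In a Tychonoff space the members
    [f_n] of a uniformly dense sequence approximate Urysohn functions, so the
    sets [{f_n < 2/3}] form a countable network and the [f_n] separate points; the
    embedding [x |-> (f_n x)_n] into a weighted cube then yields the metric
    [d(x,y) = sup_n min(1, |f_n x - f_n y|) / (n+1)]. *)
Section DenseMetric.
Context {X : Type} (T : (X -> Prop) -> Prop) (HT : tychonoff T)
  (D : nat -> CX T) (HD : uniformly_dense D).

Let fn (n : nat) : X -> R := proj1_sig (D n).

(** Approximating a Urysohn function vanishing at [x] and equal to 1 off [U]. *)
Lemma dense_base (U : X -> Prop) (x : X) :
  T U -> U x -> exists n, fn n x < 1/3 /\ forall z, fn n z < 2/3 -> U z.
Proof.
  intros TU Ux. destruct HT as [HT0 [_ Hcr]].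
  destruct (Hcr (fun y => ~ U y) x) as [h [hc [hx [hA _]]]].
  - apply (open_ext T U); [exact TU|]. intros y; split; [tauto | apply NNPP].
  - tauto.
  - destruct (HD (exist _ h hc) (1/3)) as [n Hn]; [lra|]. simpl in Hn.
    exists n. split.
    + specialize (Hn x). rewrite hx in Hn. unfold fn. abs_lra.
    + intros z Hz. apply NNPP; intros nU. specialize (Hn z).
      rewrite (hA z nU) in Hn. unfold fn in Hz. abs_lra.
Qed.

Lemma dense_countable_network : countable_network T.
Proof.
  exists (fun n z => fn n z < 2/3). intros U TU x Ux.
  destruct (dense_base U x TU Ux) as [n [Hx Hsub]]. exists n. split; [lra | exact Hsub].
Qed.

Lemma dense_separates (x y : X) : x <> y -> exists n, fn n x <> fn n y.
Proof.
  intros xy. destruct (proj1 (proj2 HT) x y xy) as [U [TU [Ux nUy]]].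
  destruct (dense_base U x TU Ux) as [n [Hx Hsub]]. exists n. intros E.
  apply nUy, Hsub. rewrite <- E. lra.
Qed.

Definition dterm (n : nat) (x y : X) : R := Rmin 1 (Rabs (fn n x - fn n y)) * / (INR n + 1).

Lemma dterm_bounds (n : nat) (x y : X) : 0 <= dterm n x y <= / (INR n + 1).
Proof.
  unfold dterm. pose proof (inv_succ_pos n). pose proof (Rabs_pos (fn n x - fn n y)).
  unfold Rmin; destruct Rle_dec; split; nra.
Qed.

Lemma dterm_le_abs (n : nat) (x y : X) : dterm n x y <= Rabs (fn n x - fn n y).
Proof.
  unfold dterm. pose proof (inv_succ_pos n). pose proof (inv_succ_le1 n).
  pose proof (Rabs_pos (fn n x - fn n y)). unfold Rmin; destruct Rle_dec; nra.
Qed.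

Lemma dterm_triangle (n : nat) (x y z : X) : dterm n x z <= dterm n x y + dterm n y z.
Proof.
  unfold dterm. rewrite <- Rmult_plus_distr_r.
  apply Rmult_le_compat_r; [apply Rlt_le, inv_succ_pos|].
  unfold Rmin; repeat destruct Rle_dec; abs_lra.
Qed.

Definition dense_metric (x y : X) : R := seqsup (fun n => dterm n x y).

Lemma dense_metric_ge (n : nat) (x y : X) : dterm n x y <= dense_metric x y.
Proof.
  apply (seqsup_ge (fun n => dterm n x y) 1). intros m. pose proof (dterm_bounds m x y).
  pose proof (inv_succ_le1 m). lra.
Qed.

Lemma dense_metric_le (x y : X) (b : R) : (forall n, dterm n x y <= b) -> dense_metric x y <= b.
Proof. apply seqsup_le. Qed.

Lemma dense_metric_is_metric : is_metric dense_metric.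
Proof.
  assert (Hpos : forall x y, 0 <= dense_metric x y).
  { intros x y. eapply Rle_trans; [apply (dterm_bounds 0) | apply dense_metric_ge]. }
  split; [exact Hpos | split; [| split]].
  - intros x y; split.
    + intros H. apply NNPP; intros xy. destruct (dense_separates x y xy) as [n Hn].
      pose proof (dense_metric_ge n x y) as Hle. rewrite H in Hle. unfold dterm in Hle.
      pose proof (inv_succ_pos n).
      assert (0 < Rmin 1 (Rabs (fn n x - fn n y))).
      { apply Rmin_glb_lt; [lra|]. apply Rabs_pos_lt. intros E; apply Hn; lra. }
      nra.
    + intros <-. apply Rle_antisym; [|apply Hpos].
      apply dense_metric_le. intros n. unfold dterm.
      unfold Rminus; rewrite Rplus_opp_r, Rabs_R0, Rmin_right, Rmult_0_l; lra.
  - intros x y. apply Rle_antisym; apply dense_metric_le; intros n; unfold dterm;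
      rewrite Rabs_minus_sym; apply dense_metric_ge.
  - intros x y z. apply dense_metric_le. intros n. pose proof (dterm_triangle n x y z).
    pose proof (dense_metric_ge n x y). pose proof (dense_metric_ge n y z). lra.
Qed.

Definition near_first (x : X) (N : nat) (e : R) : X -> Prop :=
  fun z => forall n, (n <= N)%nat -> Rabs (fn n z - fn n x) < e.

Lemma near_first_open (x : X) (N : nat) (e : R) : T (near_first x N e).
Proof.
  pose proof (proj1 HT) as HT0.
  induction N as [|N IH].
  - apply (open_ext T _ _ (cont_ball T (fn 0) (fn 0 x) e (proj2_sig (D 0%nat)))).
    intros z; split; [intros H n Hn; replace n with 0%nat by lia; exact H | intros H; apply H; lia].
  - apply (open_ext T _ _ (open_inter T HT0 _ _ IH
             (cont_ball T (fn (S N)) (fn (S N) x) e (proj2_sig (D (S N)))))).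
    intros z; split.
    + intros [H1 H2] n Hn. destruct (Nat.eq_dec n (S N)) as [-> | ne]; [exact H2|].
      apply H1; lia.
    + intros H; split; [intros n Hn; apply H; lia | apply H; lia].
Qed.

Lemma near_first_ball (x : X) (N : nat) (e : R) (z : X) :
  / (INR N + 1) <= e -> near_first x N e z -> dense_metric x z <= e.
Proof.
  intros He Hz. apply dense_metric_le. intros n. destruct (le_lt_dec n N) as [Hn | Hn].
  - specialize (Hz n Hn). pose proof (dterm_le_abs n x z). rewrite Rabs_minus_sym in Hz. lra.
  - pose proof (dterm_bounds n x z).
    assert (/ (INR n + 1) <= / (INR N + 1)).
    { apply Rinv_le_contravar; [pose proof (pos_INR N); lra|].
      apply lt_INR in Hn. lra. }
    lra.
Qed.

(** The cube metric induces the topology of [X]: balls are open since the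
    [f_n] are continuous, and the metric balls of [x] are neighbourhoods since
    [{f_n < 2/3}] lies in the [1/(3(n+1))]-ball around any [x] with [f_n x < 1/3]. *)
Lemma dense_metric_open_iff (U : X -> Prop) : T U <-> metric_open dense_metric U.
Proof.
  split.
  - intros TU x Ux. destruct (dense_base U x TU Ux) as [n [Hx Hsub]].
    pose proof (inv_succ_pos n).
    exists (/ 3 * / (INR n + 1)). split; [lra|].
    intros y Hy. apply Hsub. pose proof (dense_metric_ge n x y) as Hle. unfold dterm in Hle.
    assert (Hmin : Rmin 1 (Rabs (fn n x - fn n y)) < / 3) by nra.
    revert Hmin. unfold Rmin; destruct Rle_dec; intros; abs_lra.
  - intros MU. apply (open_ext T (fun z => exists V, (fun V => exists x N e,
        V = near_first x N e /\ forall z, V z -> U z) V /\ V z)).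
    + apply (open_union T (proj1 HT)). intros V [x [N [e [-> _]]]]. apply near_first_open.
    + intros z; split; [intros [V [[x [N [e [_ HV]]]] Vz]]; exact (HV z Vz)|].
      intros Uz. destruct (MU z Uz) as [e [He Hsub]].
      destruct (inv_succ_small (e / 2)) as [N HN]; [lra|].
      exists (near_first z N (e / 2)). split.
      * exists z, N, (e / 2). split; [reflexivity|]. intros w Hw. apply Hsub.
        pose proof (near_first_ball z N (e / 2) w (Rlt_le _ _ HN) Hw). lra.
      * intros n _. unfold Rminus; rewrite Rplus_opp_r, Rabs_R0. lra.
Qed.

Lemma dense_metrizable : metrizable T.
Proof. exists dense_metric. split; [exact dense_metric_is_metric | exact dense_metric_open_iff]. Qed.

End DenseMetric.

Section MetricFacts.
Context {X : Type} (d : X -> X -> R) (Hm : is_metric d).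

Lemma d_pos (x y : X) : 0 <= d x y.
Proof. apply Hm. Qed.

Lemma d_refl (x : X) : d x x = 0.
Proof. apply Hm. reflexivity. Qed.

Lemma d_sym (x y : X) : d x y = d y x.
Proof. apply Hm. Qed.

Lemma d_tri (x y z : X) : d x z <= d x y + d y z.
Proof. apply Hm. Qed.

Lemma d_pos_neq (x y : X) : x <> y -> 0 < d x y.
Proof.
  intros H. destruct (d_pos x y) as [Hlt | Heq]; [exact Hlt|].
  exfalso. apply H, Hm. symmetry. exact Heq.
Qed.

Lemma dist_lip (x y a : X) : Rabs (d x a - d y a) <= d x y.
Proof.
  pose proof (d_tri x y a). pose proof (d_tri y x a). rewrite (d_sym y x) in *.
  apply Rabs_le; lra.
Qed.

Context (T : (X -> Prop) -> Prop) (Hd : forall U, T U <-> metric_open d U).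

Lemma ball_open (x : X) (r : R) : T (fun y => d x y < r).
Proof.
  apply Hd. intros y Hy. exists (r - d x y). split; [lra|].
  intros z Hz. pose proof (d_tri x y z). lra.
Qed.

Lemma lipschitz_continuous (g : X -> R) (K : R) :
  0 <= K -> (forall x y, Rabs (g x - g y) <= K * d x y) -> continuous_real T g.
Proof.
  intros HK Hg U HU. apply Hd. intros x Ux. destruct (HU (g x) Ux) as [e [He Hs]].
  exists (e / (K + 1)). split; [apply Rdiv_lt_0_compat; lra|].
  intros y Hy. apply Hs. rewrite Rabs_minus_sym. eapply Rle_lt_trans; [apply Hg|].
  pose proof (d_pos x y).
  assert (e / (K + 1) * (K + 1) = e) by (field; lra).
  nra.
Qed.

Lemma cont_metric (f : X -> R) : continuous_real T f ->
  forall x e, 0 < e -> exists del, 0 < del /\ forall y, d x y < del -> Rabs (f y - f x) < e.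
Proof.
  intros Hf x e He. destruct (proj1 (Hd _) (cont_ball T f (f x) e Hf) x) as [del [Hdel H]].
  - unfold Rminus; rewrite Rplus_opp_r, Rabs_R0; exact He.
  - eauto.
Qed.

End MetricFacts.

(** A non-compact space with a countable network has an increasing sequence of
    open sets covering it, none of which is the whole space: choose one member
    of an open cover without finite subcover around each network element. *)
Lemma noncompact_exhaustion {X : Type} (T : (X -> Prop) -> Prop) (HT : is_topology T) :
  countable_network T -> ~ compact_space T ->
  exists V : nat -> X -> Prop, (forall N, T (V N)) /\
    (forall a b x, (a <= b)%nat -> V a x -> V b x) /\
    (forall x, exists N, V N x) /\ (forall N, exists x, ~ V N x).
Proof.
  intros [B HB] Hnc. apply NNPP; intros Hno. apply Hnc. intros C HCo Hcov.
  destruct (classic (exists x0 : X, True)) as [[x0 _] | Hempty].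
  2: { exists nil. split; [intros U [] | intros x; exfalso; eauto]. }
  apply NNPP; intros Hnf. apply Hno.
  destruct (Hcov x0) as [V0 [CV0 _]].
  destruct (choice (fun n U => C U /\ ((forall z, B n z -> U z) \/
              ~ exists W, C W /\ forall z, B n z -> W z))) as [U HU].
  { intros n. destruct (classic (exists W, C W /\ forall z, B n z -> W z)) as [[W HW] | nW].
    - exists W. tauto.
    - exists V0. tauto. }
  exists (fun N x => exists n, (n <= N)%nat /\ U n x). split; [|split; [|split]].
  - intros N. apply (open_ext T (fun x => exists W, (fun W => exists n, (n <= N)%nat /\ W = U n) W /\ W x)).
    + apply (open_union T HT). intros W [n [_ ->]]. apply HCo, HU.
    + intros x; split; [intros [W [[n [Hn ->]] Wx]]; eauto | intros [n [Hn Ux]]; eauto].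
  - intros a b x Hab [n [Hn Ux]]. exists n. split; [lia | exact Ux].
  - intros x. destruct (Hcov x) as [W [CW Wx]].
    destruct (HB W (HCo W CW) x Wx) as [n [Bx Bsub]].
    exists n, n. split; [lia|]. destruct (HU n) as [_ [Hsub | nW]]; [exact (Hsub x Bx)|].
    exfalso. apply nW. eauto.
  - intros N. apply NNPP; intros Hall. apply Hnf.
    exists (map U (seq 0 (S N))). split.
    + intros W HW. apply in_map_iff in HW. destruct HW as [n [<- _]]. apply HU.
    + intros x. destruct (classic (exists n, (n <= N)%nat /\ U n x)) as [[n [Hn Ux]] | nV].
      * exists (U n). split; [apply in_map, in_seq; lia | exact Ux].
      * exfalso. apply Hall. eauto.
Qed.

(** Let [W_n] be an open cover of a metric
    space and [x_N] points with [x_N] outside [W_n] for [n <= N], each [x_N]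
    at distance [>= rho_N] from all other [x_M].  For every binary sequence [s]
    the bump function [h_s = min(1, dist(., {x_M | s M = false}))] vanishes at
    [x_N] when [s N] is false and is [>= rho_N] when it is true.  Around its
    graph we take the open set [G_s] of width [w_n] over [W_n], where [w_n] is
    below every [rho_N / 2] with [N < n].  A function whose graph lies in both
    [G_s] and [G_s'] is [rho_N/2]-close to [h_s] and [h_s'] at each [x_N], so
    [s = s'].  These are continuum many disjoint open sets: not ccc. *)
Section EscapingSequence.
Context {X : Type} (T : (X -> Prop) -> Prop) (HT : is_topology T)
  (d : X -> X -> R) (Hm : is_metric d) (Hd : forall U, T U <-> metric_open d U).

Variable W : nat -> X -> Prop.
Hypothesis W_open : forall n, T (W n).
Hypothesis W_cover : forall x, exists n, W n x.
Variable xs : nat -> X.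
Hypothesis xs_late : forall n N, W n (xs N) -> (N < n)%nat.
Variable rho : nat -> R.
Hypothesis rho_pos : forall N, 0 < rho N.
Hypothesis rho_le1 : forall N, rho N <= 1.
Hypothesis rho_sep : forall N M, M <> N -> rho N <= d (xs N) (xs M).

Fixpoint width (n : nat) : R :=
  match n with
  | O => 1
  | S n' => Rmin (width n') (rho n' / 2)
  end.

Lemma width_pos (n : nat) : 0 < width n.
Proof.
  induction n as [|n IH]; simpl; [lra|].
  apply Rmin_glb_lt; [exact IH | specialize (rho_pos n); lra].
Qed.

Lemma width_le (n N : nat) : (N < n)%nat -> width n <= rho N / 2.
Proof.
  induction n as [|n IH]; intros HN; [lia|]. simpl.
  destruct (Nat.eq_dec N n) as [-> | ne]; [apply Rmin_r|].
  eapply Rle_trans; [apply Rmin_l | apply IH; lia].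
Qed.

Definition bump_term (s : nat -> bool) (x : X) (M : nat) : R :=
  if s M then 1 else Rmin 1 (d x (xs M)).

Definition bump (s : nat -> bool) (x : X) : R := seqinf (bump_term s x).

Lemma bump_term_bounds (s : nat -> bool) (x : X) (M : nat) : 0 <= bump_term s x M <= 1.
Proof.
  unfold bump_term. destruct (s M); [lra|].
  pose proof (d_pos d Hm x (xs M)). unfold Rmin; destruct Rle_dec; lra.
Qed.

Lemma bump_lip (s : nat -> bool) (x y : X) : Rabs (bump s x - bump s y) <= 1 * d x y.
Proof.
  assert (Hhalf : forall a b, bump s a <= bump s b + d a b).
  { intros a b. cut (bump s a - d a b <= bump s b); [lra|].
    apply seqinf_ge. intros M.
    assert (bump_term s a M <= bump_term s b M + d a b).
    { unfold bump_term. pose proof (d_pos d Hm a b). destruct (s M); [lra|].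
      pose proof (d_tri d Hm a b (xs M)). unfold Rmin; repeat destruct Rle_dec; lra. }
    pose proof (seqinf_le (bump_term s a) 0 M (fun n => proj1 (bump_term_bounds s a n))).
    unfold bump. lra. }
  pose proof (Hhalf x y). pose proof (Hhalf y x). rewrite (d_sym d Hm y x) in *.
  apply Rabs_le. lra.
Qed.

Definition bumpC (s : nat -> bool) : CX T :=
  exist _ (bump s) (lipschitz_continuous d Hm T Hd (bump s) 1 ltac:(lra) (bump_lip s)).

Lemma bump_false (s : nat -> bool) (N : nat) : s N = false -> bump s (xs N) <= 0.
Proof.
  intros H. eapply Rle_trans.
  - apply (seqinf_le _ 0 N). intros M. apply bump_term_bounds.
  - unfold bump_term. rewrite H, d_refl by exact Hm. unfold Rmin; destruct Rle_dec; lra.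
Qed.

Lemma bump_true (s : nat -> bool) (N : nat) : s N = true -> rho N <= bump s (xs N).
Proof.
  intros H. apply seqinf_ge. intros M. unfold bump_term.
  destruct (s M) eqn:E; [apply rho_le1|].
  assert (M <> N) by (intros ->; congruence).
  apply Rmin_glb; [apply rho_le1 | apply rho_sep; assumption].
Qed.

Definition bump_nbhd (s : nat -> bool) : X * R -> Prop :=
  fun q => exists n, W n (fst q) /\ Rabs (snd q - bump s (fst q)) < width n.

Lemma bump_nbhd_open (s : nat -> bool) : prod_open T (bump_nbhd s).
Proof.
  intros x y [n [Hx Hy]]. simpl in *.
  destruct (tube_open T (bump s) (width n) (proj2_sig (bumpC s)) x y Hy)
    as [U [e [TU [Ux [He HUe]]]]].
  exists (fun x' => W n x' /\ U x'), e. split; [apply open_inter; auto|].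
  split; [auto|]. split; [exact He|].
  intros x' y' [H1 H2] H3. exists n. split; [exact H1 | exact (HUe x' y' H2 H3)].
Qed.

Lemma bump_in_nbhd (s : nat -> bool) : F_ (T := T) (bump_nbhd s) (bumpC s).
Proof.
  intros x. destruct (W_cover x) as [n Hn]. exists n. split; [exact Hn|]. simpl.
  unfold Rminus; rewrite Rplus_opp_r, Rabs_R0. apply width_pos.
Qed.

(** A graph in both [G_s] and [G_s'] forces [s = s']: at [x_N] the widths are
    at most [rho_N/2], while [h_s] and [h_s'] differ by [rho_N] if [s N <> s' N]. *)
Lemma bump_nbhd_disjoint (s s' : nat -> bool) (g : CX T) :
  F_ (T := T) (bump_nbhd s) g -> F_ (T := T) (bump_nbhd s') g -> s = s'.
Proof.
  intros H1 H2. apply functional_extensionality. intros N. apply NNPP; intros ne.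
  destruct (H1 (xs N)) as [n [Hn1 Hn2]]. destruct (H2 (xs N)) as [n' [Hn1' Hn2']].
  simpl in *. pose proof (width_le n N (xs_late n N Hn1)).
  pose proof (width_le n' N (xs_late n' N Hn1')).
  destruct (s N) eqn:E1; destruct (s' N) eqn:E2; try congruence.
  - pose proof (bump_true s N E1). pose proof (bump_false s' N E2). abs_lra.
  - pose proof (bump_true s' N E2). pose proof (bump_false s N E1). abs_lra.
Qed.

Lemma escaping_not_ccc : ~ ccc (graph_open T).
Proof.
  apply (ccc_no_cantor_family _ (fun s => F_ (T := T) (bump_nbhd s))).
  - intros s. apply basic_graph_open, bump_nbhd_open.
  - intros s. exists (bumpC s). apply bump_in_nbhd.
  - exact bump_nbhd_disjoint.
Qed.

End EscapingSequence.

Section ExhaustionEscape.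
Context {X : Type} (T : (X -> Prop) -> Prop)
  (d : X -> X -> R) (Hm : is_metric d) (Hd : forall U, T U <-> metric_open d U).

Variable V : nat -> X -> Prop.
Hypothesis V_open : forall N, T (V N).
Hypothesis V_mono : forall a b x, (a <= b)%nat -> V a x -> V b x.
Variable m : X -> nat.
Hypothesis m_spec : forall x, V (m x) x.
Variable p : nat -> X.
Hypothesis p_spec : forall N, ~ V N (p N).

(** Indices [k_(N+1) > k_N] so large that [x_N := p(k_N)] lies in [V_(k_(N+1))],
    where [p N] is a point outside [V_N] and [m x] an index with [x] in [V_(m x)]. *)
Fixpoint escape_index (N : nat) : nat :=
  match N with
  | O => O
  | S N' => Nat.max (S (escape_index N')) (m (p (escape_index N')))
  end.

Local Notation k := escape_index.
Let xs (N : nat) : X := p (k N).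

Lemma escape_index_mono (N M : nat) : (N <= M)%nat -> (k N <= k M)%nat.
Proof. intros H. induction H as [|M HM IH]; [lia|]. cbn [escape_index]. lia. Qed.

Lemma escape_index_ge (N : nat) : (N <= k N)%nat.
Proof. induction N as [|N IH]; cbn [escape_index]; lia. Qed.

Lemma escape_in (N : nat) : V (k (S N)) (xs N).
Proof. apply (V_mono (m (xs N))); [unfold xs; cbn [escape_index]; lia | apply m_spec]. Qed.

Lemma escape_out (n N : nat) : (n <= N)%nat -> ~ V (k n) (xs N).
Proof. intros H Hin. apply (p_spec (k N)), (V_mono (k n)); [apply escape_index_mono|]; assumption. Qed.

Lemma escape_late (n N : nat) : V (k n) (xs N) -> (N < n)%nat.
Proof. intros Hin. destruct (Nat.lt_ge_cases N n); [assumption|]. exfalso. exact (escape_out n N H Hin). Qed.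

(** Each [x_N] has positive distance to all other escaping points: the later
    ones lie outside the open set [V_(k_(N+1))] containing [x_N]. *)
Lemma escape_isolated (N : nat) :
  exists r, 0 < r /\ r <= 1 /\ forall M, M <> N -> r <= d (xs N) (xs M).
Proof.
  destruct (proj1 (Hd _) (V_open (k (S N))) (xs N) (escape_in N)) as [e [He Hball]].
  destruct (finite_pos_lower_bound (fun M => d (xs N) (xs M)) N) as [r [Hr HrM]].
  { intros M HM. apply (d_pos_neq d Hm). intros E.
    apply (escape_out (S M) N); [lia|]. rewrite E. apply escape_in. }
  exists (Rmin 1 (Rmin e r)). split; [repeat apply Rmin_glb_lt; lra|]. split; [apply Rmin_l|].
  intros M HMN. eapply Rle_trans; [apply Rmin_r|].
  destruct (Nat.lt_ge_cases M N) as [HMN' | HMN'].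
  - eapply Rle_trans; [apply Rmin_r | apply HrM; exact HMN'].
  - eapply Rle_trans; [apply Rmin_l|]. apply Rnot_lt_le. intros Hlt.
    apply (escape_out (S N) M); [lia | apply Hball, Hlt].
Qed.

Lemma exhaustion_escaping_sequence :
  exists (W : nat -> X -> Prop) (xs : nat -> X) (rho : nat -> R),
    (forall n, T (W n)) /\ (forall x, exists n, W n x) /\
    (forall n N, W n (xs N) -> (N < n)%nat) /\
    (forall N, 0 < rho N /\ rho N <= 1 /\ forall M, M <> N -> rho N <= d (xs N) (xs M)).
Proof.
  destruct (choice _ escape_isolated) as [rho Hrho].
  exists (fun n => V (k n)), xs, rho. split; [|split; [|split]].
  - intros n. apply V_open.
  - intros x. exists (m x). apply (V_mono (m x)); [apply escape_index_ge | apply m_spec].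
  - exact escape_late.
  - exact Hrho.
Qed.

End ExhaustionEscape.

Lemma ccc_compact {X : Type} (T : (X -> Prop) -> Prop) (HT : is_topology T)
  (d : X -> X -> R) (Hm : is_metric d) (Hd : forall U, T U <-> metric_open d U) :
  countable_network T -> ccc (graph_open T) -> compact_space T.
Proof.
  intros Hnet Hc. apply NNPP; intros Hnc.
  destruct (noncompact_exhaustion T HT Hnet Hnc) as [V [Vopen [Vmono [Vcover Vproper]]]].
  destruct (choice _ Vcover) as [m Hmm]. destruct (choice _ Vproper) as [p Hp].
  destruct (exhaustion_escaping_sequence T d Hm Hd V Vopen Vmono m Hmm p Hp)
    as [W [xs [rho [Wopen [Wcover [xs_late Hrho]]]]]].
  apply (escaping_not_ccc T HT d Hm Hd W Wopen Wcover xs xs_late rho); try exact Hc;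
    intros N; apply Hrho.
Qed.

Lemma list_witnesses {A B : Type} (Rel : A -> B -> Prop) (l : list A) :
  (forall a, In a l -> exists b, Rel a b) -> exists lb, forall a, In a l -> exists b, In b lb /\ Rel a b.
Proof.
  induction l as [|a l IH]; intros H.
  - exists nil. intros a [].
  - destruct IH as [lb Hlb]; [intros a' Ha'; apply H; right; exact Ha'|].
    destruct (H a (or_introl eq_refl)) as [b Hb]. exists (b :: lb).
    intros a' [<- | Ha']; [exists b; split; [left|]; auto|].
    destruct (Hlb a' Ha') as [b' [Hb' Rb']]. exists b'. split; [right|]; auto.
Qed.

Section CompactSpace.
Context {X : Type} (T : (X -> Prop) -> Prop) (HT : is_topology T) (Hcomp : compact_space T).

Lemma compact_uniform (P : (X -> Prop) -> R -> Prop) :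
  (forall x, exists U r, T U /\ U x /\ 0 < r /\ P U r) ->
  exists eps, 0 < eps /\ forall z, exists U r, U z /\ eps <= r /\ P U r.
Proof.
  intros H.
  destruct (Hcomp (fun U => T U /\ exists r, 0 < r /\ P U r)) as [l [Hl Hcov]].
  { intros U [TU _]. exact TU. }
  { intros x. destruct (H x) as [U [r [TU [Ux [rp PU]]]]]. exists U. split; eauto. }
  assert (Hmin : forall l : list (X -> Prop), (forall U, In U l -> exists r, 0 < r /\ P U r) ->
            exists eps, 0 < eps /\ forall U, In U l -> exists r, eps <= r /\ P U r).
  { induction l0 as [|U l0 IH]; intros Hl0.
    - exists 1. split; [lra | intros U []].
    - destruct IH as [e [He HU]]; [intros V HV; apply Hl0; right; exact HV|].
      destruct (Hl0 U (or_introl eq_refl)) as [r [rp PU]].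
      exists (Rmin e r). split; [apply Rmin_glb_lt; assumption|].
      intros V [<- | HV]; [exists r; split; [apply Rmin_r | exact PU]|].
      destruct (HU V HV) as [r' [Hr' PV]]. exists r'. split; [|exact PV].
      eapply Rle_trans; [apply Rmin_l | exact Hr']. }
  destruct (Hmin l) as [e [He HU]]; [intros U HU; apply Hl, HU|].
  exists e. split; [exact He|]. intros z. destruct (Hcov z) as [U [HUl Uz]].
  destruct (HU U HUl) as [r [Hr PU]]. eauto.
Qed.

Lemma tube_inside (f : X -> R) (G : X * R -> Prop) :
  continuous_real T f -> prod_open T G -> (forall x, G (x, f x)) ->
  exists eps, 0 < eps /\ forall x y, Rabs (y - f x) < eps -> G (x, y).
Proof.
  intros Hf HG Hgr.
  destruct (compact_uniform (fun U r => forall x', U x' -> forall y, Rabs (y - f x') < r -> G (x', y)))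
    as [e [He Hz]].
  { intros x. destruct (HG x (f x) (Hgr x)) as [U0 [e [TU0 [U0x [He HUe]]]]].
    exists (fun x' => U0 x' /\ Rabs (f x' - f x) < e / 2), (e / 2).
    split; [apply open_inter; [exact HT | exact TU0 | apply cont_ball, Hf]|].
    split; [split; [exact U0x | abs_lra]|]. split; [lra|].
    intros x' [H1 H2] y Hy. apply HUe; [exact H1 | abs_lra]. }
  exists e. split; [exact He|]. intros x y Hy. destruct (Hz x) as [U [r [Ux [Hr PU]]]].
  apply PU; [exact Ux | lra].
Qed.

Lemma cont_bounded (f : X -> R) : continuous_real T f -> exists M, 0 < M /\ forall x, Rabs (f x) <= M.
Proof.
  intros Hf.
  destruct (compact_uniform (fun U r => forall x', U x' -> Rabs (f x') <= / r)) as [e [He Hz]].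
  { intros x. pose proof (Rabs_pos (f x)).
    exists (fun x' => Rabs (f x' - f x) < 1), (/ (Rabs (f x) + 1)).
    split; [apply cont_ball, Hf|]. split; [abs_lra|].
    split; [apply Rinv_0_lt_compat; lra|].
    intros x' Hx'. rewrite Rinv_inv. abs_lra. }
  exists (/ e). split; [apply Rinv_0_lt_compat, He|].
  intros x. destruct (Hz x) as [U [r [Ux [Hr PU]]]].
  eapply Rle_trans; [apply PU, Ux | apply Rinv_le_contravar; assumption].
Qed.

Context (d : X -> X -> R) (Hm : is_metric d) (Hd : forall U, T U <-> metric_open d U).

Lemma unif_continuous (f : X -> R) : continuous_real T f ->
  forall e, 0 < e -> exists del, 0 < del /\ forall y z, d y z < del -> Rabs (f y - f z) < e.
Proof.
  intros Hf e He.
  destruct (compact_uniform (fun U r => forall a b, U a -> d a b < r -> Rabs (f a - f b) < e))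
    as [del [Hdel Hz]].
  { intros x. destruct (cont_metric d T Hd f Hf x (e / 2)) as [d0 [Hd0 Hc]]; [lra|].
    exists (fun y => d x y < d0 / 2), (d0 / 2).
    split; [apply (ball_open d Hm T Hd)|]. split; [rewrite (d_refl d Hm); lra|]. split; [lra|].
    intros a b Ha Hb. pose proof (d_tri d Hm x a b).
    pose proof (Hc a ltac:(lra)). pose proof (Hc b ltac:(lra)). abs_lra. }
  exists del. split; [exact Hdel|]. intros y z Hyz. destruct (Hz y) as [U [r [Uy [Hr PU]]]].
  apply PU; [exact Uy | lra].
Qed.

Lemma finite_net (r : R) : 0 < r -> exists l : list X, forall z, exists a, In a l /\ d a z < r.
Proof.
  intros Hr.
  destruct (Hcomp (fun U => exists a, U = fun z => d a z < r)) as [lU [HlU Hcov]].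
  { intros U [a ->]. apply (ball_open d Hm T Hd). }
  { intros x. exists (fun z => d x z < r). split; [eauto | rewrite (d_refl d Hm); exact Hr]. }
  destruct (list_witnesses (fun U a => U = fun z => d a z < r) lU HlU) as [la Hla].
  exists la. intros z. destruct (Hcov z) as [U [HU Uz]].
  destruct (Hla U HU) as [a [Ha ->]]. eauto.
Qed.

End CompactSpace.

Definition grid (k n : nat) : R :=
  (INR (fst (Cantor.of_nat n)) - INR (snd (Cantor.of_nat n))) / (INR k + 1).

Lemma grid_approx (k : nat) (v : R) : exists n, v - / (INR k + 1) < grid k n <= v.
Proof.
  pose proof (pos_INR k).
  set (z := (up ((INR k + 1) * v) - 1)%Z).
  destruct (archimed ((INR k + 1) * v)) as [Hup1 Hup2].
  assert (Hz : IZR z <= (INR k + 1) * v < IZR z + 1)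
    by (unfold z; rewrite minus_IZR; simpl; lra).
  exists (Cantor.to_nat (Z.to_nat z, Z.to_nat (- z))).
  unfold grid. rewrite Cantor.cancel_of_to; simpl.
  replace (INR (Z.to_nat z) - INR (Z.to_nat (- z))) with (IZR z)
    by (rewrite !INR_IZR_INZ, <- minus_IZR; f_equal; lia).
  assert (Hdiv : IZR z / (INR k + 1) * (INR k + 1) = IZR z) by (field; lra).
  assert (Hinv : / (INR k + 1) * (INR k + 1) = 1) by (field; lra).
  split; nra.
Qed.

Fixpoint code_nth (c i : nat) : nat :=
  match i with
  | O => fst (Cantor.of_nat c)
  | S i' => code_nth (snd (Cantor.of_nat c)) i'
  end.

Lemma code_nth_surj (v : nat -> nat) (N : nat) :
  exists c, forall i, (i <= N)%nat -> code_nth c i = v i.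
Proof.
  revert v. induction N as [|N IH]; intros v.
  - exists (Cantor.to_nat (v O, O)). intros i Hi. replace i with O by lia.
    cbn [code_nth]. rewrite Cantor.cancel_of_to. reflexivity.
  - destruct (IH (fun i => v (S i))) as [c Hc].
    exists (Cantor.to_nat (v O, c)). intros [|i] Hi; cbn [code_nth];
      rewrite Cantor.cancel_of_to; [reflexivity|].
    apply Hc. lia.
Qed.

Lemma grid_sequence (k N : nat) (value : nat -> R) :
  exists c, forall i, (i <= N)%nat ->
    value i - / (INR k + 1) < grid k (code_nth c i) <= value i.
Proof.
  destruct (choice (fun i n => value i - / (INR k + 1) < grid k n <= value i)) as [v Hv].
  { intros i. apply grid_approx. }
  destruct (code_nth_surj v N) as [c Hc]. exists c. intros i Hi. rewrite Hc by exact Hi. apply Hv.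
Qed.

Lemma Rmin_lip (a b a' b' K : R) :
  Rabs (a - a') <= K -> Rabs (b - b') <= K -> Rabs (Rmin a b - Rmin a' b') <= K.
Proof. intros H1 H2. unfold Rmin; repeat destruct Rle_dec; abs_lra. Qed.

(** Minima of finitely many cones [x |-> q_i + L d(x, a_i)] (with a constant
    [q_(length l)] in case the list of apexes is empty). *)
Section ConeMinima.
Context {X : Type} (d : X -> X -> R) (Hm : is_metric d).

Fixpoint cone_min (L : R) (q : nat -> R) (l : list X) (x : X) : R :=
  match l with
  | nil => q O
  | a :: l' => Rmin (q O + L * d x a) (cone_min L (fun i => q (S i)) l' x)
  end.

Lemma cone_min_lip (L : R) (q : nat -> R) (l : list X) (x y : X) :
  0 <= L -> Rabs (cone_min L q l x - cone_min L q l y) <= L * d x y.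
Proof.
  intros HL. revert q. induction l as [|a l IH]; intros q; simpl.
  - unfold Rminus; rewrite Rplus_opp_r, Rabs_R0. pose proof (d_pos d Hm x y). nra.
  - apply Rmin_lip; [|apply IH].
    replace (q O + L * d x a - (q O + L * d y a)) with (L * (d x a - d y a)) by ring.
    rewrite Rabs_mult, (Rabs_right L) by lra.
    apply Rmult_le_compat_l; [exact HL | apply (dist_lip d Hm)].
Qed.

Lemma cone_min_le (L : R) (q : nat -> R) (l : list X) (x a : X) (i : nat) :
  nth_error l i = Some a -> cone_min L q l x <= q i + L * d x a.
Proof.
  revert q i. induction l as [|b l IH]; intros q [|i] Hi; simpl in *; try discriminate.
  - injection Hi as ->. apply Rmin_l.
  - eapply Rle_trans; [apply Rmin_r | exact (IH _ i Hi)].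
Qed.

Lemma cone_min_ge (L : R) (q : nat -> R) (l : list X) (x : X) (c : R) :
  c <= q (length l) -> (forall i a, nth_error l i = Some a -> c <= q i + L * d x a) ->
  c <= cone_min L q l x.
Proof.
  revert q. induction l as [|b l IH]; intros q Hdef Hcones; simpl in *; [exact Hdef|].
  apply Rmin_glb; [apply (Hcones O b); reflexivity|].
  apply IH; [exact Hdef | intros i a Hi; exact (Hcones (S i) a Hi)].
Qed.

Variables (f : X -> R) (eps M del r L : R) (l : list X) (q : nat -> R).
Hypothesis f_bound : forall x, Rabs (f x) <= M.
Hypothesis f_unif : forall y z, d y z < del -> Rabs (f y - f z) < eps / 4.
Hypothesis L_pos : 0 <= L.
Hypothesis L_steep : 2 * M + 1 < L * del.
Hypothesis r_pos : 0 < r.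
Hypothesis r_del : r < del.
Hypothesis r_eps : r <= eps / 4.
Hypothesis Lr_eps : L * r <= eps / 4.
Hypothesis l_net : forall z, exists a, In a l /\ d a z < r.
Hypothesis q_heights : forall i a, nth_error l i = Some a -> f a - r < q i <= f a.
Hypothesis q_default : M - r < q (length l).

Lemma cone_min_upper (x : X) : cone_min L q l x < f x + eps / 2.
Proof.
  destruct (l_net x) as [a [Ha Hax]]. destruct (In_nth_error l a Ha) as [i Hi].
  pose proof (cone_min_le L q l x a i Hi). pose proof (q_heights i a Hi).
  pose proof (f_unif a x ltac:(lra)). rewrite (d_sym d Hm) in Hax.
  assert (L * d x a <= L * r) by (apply Rmult_le_compat_l; lra).
  abs_lra.
Qed.

Lemma cone_min_lower (x : X) : f x - eps / 2 <= cone_min L q l x.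
Proof.
  apply cone_min_ge.
  - pose proof (f_bound x). abs_lra.
  - intros i a Hi. pose proof (q_heights i a Hi). pose proof (d_pos d Hm x a).
    destruct (Rlt_le_dec (d x a) del) as [Hnear | Hfar].
    + pose proof (f_unif x a Hnear). assert (0 <= L * d x a) by nra. abs_lra.
    + pose proof (f_bound x). pose proof (f_bound a).
      assert (L * del <= L * d x a) by (apply Rmult_le_compat_l; lra). abs_lra.
Qed.

End ConeMinima.

(** On a compact metric space, minima of cones with apexes in a
    [1/(k+1)]-net, integer slopes and grid heights form a countable family that
    is uniformly dense in [C(X)]; by the tube lemma, the graph-open tubes of
    radius [1/(j+1)] around its members form a countable base. *)
Section CompactMetric.
Context {X : Type} (T : (X -> Prop) -> Prop) (HT : is_topology T) (Hcomp : compact_space T)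
  (d : X -> X -> R) (Hm : is_metric d) (Hd : forall U, T U <-> metric_open d U).

Definition net (k : nat) : list X :=
  epsilon (inhabits nil) (fun l => forall z, exists a, In a l /\ d a z < / (INR k + 1)).

Lemma net_spec (k : nat) (z : X) : exists a, In a (net k) /\ d a z < / (INR k + 1).
Proof.
  revert z. unfold net. apply epsilon_spec.
  apply (finite_net T Hcomp d Hm Hd), inv_succ_pos.
Qed.

Lemma cone_parameters (M del eps : R) : 0 < del -> 0 < eps ->
  exists L k : nat, 2 * M + 1 < INR L * del /\ / (INR k + 1) < del /\
    INR L * / (INR k + 1) <= eps / 4 /\ / (INR k + 1) <= eps / 4.
Proof.
  intros Hdel He.
  destruct (INR_unbounded ((2 * M + 1) / del)) as [L HL].
  pose proof (pos_INR L).
  destruct (inv_succ_small (Rmin del (eps / (4 * (INR L + 1))))) as [k Hk].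
  { apply Rmin_glb_lt; [exact Hdel | apply Rdiv_lt_0_compat; lra]. }
  exists L, k. pose proof (inv_succ_pos k).
  assert (Hr : / (INR k + 1) * (4 * (INR L + 1)) < eps).
  { assert (Hr' : / (INR k + 1) < eps / (4 * (INR L + 1)))
      by (eapply Rlt_le_trans; [exact Hk | apply Rmin_r]).
    apply (Rmult_lt_compat_r (4 * (INR L + 1))) in Hr'; [|lra].
    unfold Rdiv in Hr'. rewrite Rmult_assoc, Rinv_l, Rmult_1_r in Hr'; lra. }
  assert (Hdel' : / (INR k + 1) < del) by (eapply Rlt_le_trans; [exact Hk | apply Rmin_l]).
  apply (Rmult_lt_compat_r del) in HL; [|exact Hdel].
  unfold Rdiv in HL. rewrite Rmult_assoc, Rinv_l, Rmult_1_r in HL by lra.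
  repeat split; nra.
Qed.

Definition cone_fun (k L c : nat) : X -> R :=
  cone_min d (INR L) (fun i => grid k (code_nth c i)) (net k).

Lemma cone_fun_cont (k L c : nat) : continuous_real T (cone_fun k L c).
Proof.
  apply (lipschitz_continuous d Hm T Hd _ (INR L)); [apply pos_INR|].
  intros x y. apply (cone_min_lip d Hm), pos_INR.
Qed.

Lemma cone_fun_dense (f : X -> R) : continuous_real T f -> forall eps, 0 < eps ->
  exists k L c, forall x, Rabs (cone_fun k L c x - f x) < eps.
Proof.
  intros Hf eps He.
  destruct (cont_bounded T Hcomp f Hf) as [M [HM HMb]].
  destruct (unif_continuous T Hcomp d Hm Hd f Hf (eps / 4)) as [del [Hdel Hu]]; [lra|].
  destruct (cone_parameters M del eps Hdel He) as [L [k [HLdel [Hrdel [HLr Hreps]]]]].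
  set (r := / (INR k + 1)) in *.
  assert (Hr0 : 0 < r) by apply inv_succ_pos.
  destruct (grid_sequence k (length (net k))
              (fun i => match nth_error (net k) i with Some a => f a | None => M end))
    as [c Hc].
  exists k, L, c. intros x.
  assert (Hheights : forall i a, nth_error (net k) i = Some a ->
            f a - r < grid k (code_nth c i) <= f a).
  { intros i a Hi. specialize (Hc i). rewrite Hi in Hc. apply Hc.
    apply Nat.lt_le_incl, nth_error_Some. congruence. }
  assert (Hdefault : M - r < grid k (code_nth c (length (net k)))).
  { specialize (Hc (length (net k)) (le_n _)). rewrite (proj2 (nth_error_None _ _) (le_n _)) in Hc.
    apply Hc. }
  unfold cone_fun.
  pose proof (cone_min_upper d Hm f eps del r (INR L) (net k) _ Hu (pos_INR L) Hrdel HLr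
                (net_spec k) Hheights x).
  pose proof (cone_min_lower d Hm f eps M del r (INR L) (net k) _ HMb Hu (pos_INR L) HLdel Hr0
                Hreps Hheights Hdefault x).
  abs_lra.
Qed.

Definition approx_fun (n : nat) : X -> R :=
  let '(k, n') := Cantor.of_nat n in let '(L, c) := Cantor.of_nat n' in cone_fun k L c.

Lemma approx_fun_cont (n : nat) : continuous_real T (approx_fun n).
Proof.
  unfold approx_fun. destruct (Cantor.of_nat n) as [k n'].
  destruct (Cantor.of_nat n') as [L c]. apply cone_fun_cont.
Qed.

Lemma approx_fun_dense (f : X -> R) : continuous_real T f -> forall eps, 0 < eps ->
  exists n, forall x, Rabs (approx_fun n x - f x) < eps.
Proof.
  intros Hf eps He. destruct (cone_fun_dense f Hf eps He) as [k [L [c H]]].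
  exists (Cantor.to_nat (k, Cantor.to_nat (L, c))). unfold approx_fun.
  rewrite !Cantor.cancel_of_to. exact H.
Qed.

(** The tubes of radius [1/(j+1)] around the [approx_fun i] form a countable base
    of the graph topology: every graph-open set around [f] contains a uniform tube. *)
Lemma compact_metric_second_countable : second_countable (graph_open T).
Proof.
  exists (fun m => let '(i, j) := Cantor.of_nat m in
             F_ (T := T) (tube (approx_fun i) (/ (INR j + 1)))).
  split.
  - intros m. destruct (Cantor.of_nat m) as [i j].
    apply basic_graph_open, tube_open, approx_fun_cont.
  - intros W HW f Wf. destruct (HW f Wf) as [G [HG [Gf HGW]]].
    destruct (tube_inside T HT Hcomp (proj1_sig f) G (proj2_sig f) HG Gf) as [e [He Htube]].
    destruct (inv_succ_small (e / 2)) as [j Hj]; [lra|].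
    destruct (approx_fun_dense (proj1_sig f) (proj2_sig f) (/ (INR j + 1)) (inv_succ_pos j))
      as [i Hi].
    exists (Cantor.to_nat (i, j)). rewrite Cantor.cancel_of_to. split.
    + intros x. unfold tube; simpl. rewrite Rabs_minus_sym. apply Hi.
    + intros g Hg. apply HGW. intros x. apply Htube.
      specialize (Hg x); specialize (Hi x). unfold tube in Hg; simpl in Hg. abs_lra.
Qed.

End CompactMetric.

Lemma ccc_compact_metrizable {X : Type} (T : (X -> Prop) -> Prop) (HT : tychonoff T) :
  ccc (graph_open T) -> compact_space T /\ metrizable T.
Proof.
  intros Hc. destruct (ccc_uniformly_dense T (proj1 HT) Hc) as [D HD].
  pose proof (dense_metrizable T HT D HD) as Hmetr.
  split; [|exact Hmetr].
  destruct Hmetr as [d [Hm Hd]].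
  exact (ccc_compact T (proj1 HT) d Hm Hd (dense_countable_network T HT D HD) Hc).
Qed.

Theorem proposition2p2 (X : Type) (T : (X -> Prop) -> Prop) (HT : tychonoff T) :
  (second_countable (graph_open T) <-> compact_space T /\ metrizable T) /\
  (countable_network (graph_open T) <-> compact_space T /\ metrizable T) /\
  (separable (graph_open T) <-> compact_space T /\ metrizable T) /\
  (ccc (graph_open T) <-> compact_space T /\ metrizable T).
Proof.
  assert (H51 : compact_space T /\ metrizable T -> second_countable (graph_open T)).
  { intros [Hcomp [d [Hm Hd]]]. exact (compact_metric_second_countable T (proj1 HT) Hcomp d Hm Hd). }
  pose proof (ccc_compact_metrizable T HT) as H45.
  pose proof (second_countable_network (graph_open T)) as H12.
  pose proof (network_separable (graph_open T)
                (exist _ (fun _ => 0) (cont_const T (proj1 HT) 0))) as H23.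
  pose proof (separable_ccc (graph_open T)) as H34.
  tauto.
Qed.
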